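(* Let $X$ be an uncountable regular topological space which is open Whyburn and $\mathcal{K}$-Lindel\''{o}f. Then $X$ is a Lusin space.
   Context: A space $X$ is open Whyburn if for every open set $A\subseteq X$ and every point $x\in\overline{A}\setminus A$ there is an open set $B\subseteq A$ with $\overline{B}\setminus A=\{x\}$. $\mathcal{K}$ denotes the collection of all families $\mathcal{U}$ of open subsets of $X$ such that $X=\bigcup\{\overline{U}:U\in\mathcal{U}\}$. $X$ is $\mathcal{K}$-Lindel\''{o}f if every $\mathcal{U}\in\mathcal{K}$ has a countable subfamily belonging to $\mathcal{K}$. A Hausdorff space $X$ is a Lusin space (in the sense of Kunen) if (a) every nowhere dense subset of $X$ is countable, (b) $X$ has at most countably many isolated points, and (c) $X$ is uncountable. *)

From mathcomp Require Import all_boot all_order.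
From mathcomp Require Import all_classical all_reals all_analysis.
Set Implicit Arguments. Unset Strict Implicit. Unset Printing Implicit Defensive.
Local Open Scope classical_set_scope.

Definition open_whyburn (X : topologicalType) : Prop :=
  forall A : set X, open A -> forall x : X, closure A x -> ~ A x ->
    exists B : set X, [/\ open B, B `<=` A & closure B `\` A = [set x]].

Definition in_K (X : topologicalType) (U : set (set X)) : Prop :=
  (forall V, U V -> open V) /\ \bigcup_(V in U) closure V = [set: X].

Definition K_lindelof (X : topologicalType) : Prop :=
  forall U : set (set X), in_K U ->
    exists U' : set (set X), [/\ U' `<=` U, countable U' & in_K U'].

Definition nowhere_dense (X : topologicalType) (A : set X) : Prop :=
  interior (closure A) = set0.

Definition isolated_point (X : topologicalType) (x : X) : Prop :=
  open [set x].

(* Lusin space in the sense of Kunen *)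
Definition lusin_space (X : topologicalType) : Prop :=
  [/\ hausdorff_space X,
      (forall A : set X, nowhere_dense A -> countable A),
      countable [set x : X | isolated_point x]
    & ~ countable [set: X]].

From mathcomp Require Import all_boot all_order.
From mathcomp Require Import all_classical all_reals all_analysis.
Local Open Scope classical_set_scope.

(* A K-Lindelof space contains no uncountable set S such that every point lies
   in the closure of an open set whose closure meets S in at most one point:
   these open sets form a member of K, and a countable subfamily in K writes S
   as a countable union of sets with at most one point.  For a closed nowhere dense M, open Whyburn
   provides at each x in M an open B disjoint from M with cl B meeting M exactly
   in x, and regularity handles the points off M.  For the set I of isolated
   points, cl I \ I is closed nowhere dense, hence countable.  If I were
   uncountable, Whyburn sets at the points of cl I \ I, together with a
   splitting of an uncountable set into two uncountable halves, would give an
   uncountable J included in I with cl I \ I included in cl (I \ J); the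
   counting argument then applies to J, because an isolated point in the
   closure of a set belongs to the set. *)

Lemma countableU T (A B : set T) :
  countable A -> countable B -> countable (A `|` B).
Proof.
by move=> cA cB; rewrite -bigcup2E; apply: bigcup_countable => // -[|[|]].
Qed.

Lemma subset1_countable T (A : set T) : is_subset1 A -> countable A.
Proof.
move=> A1; apply/countable_injP; exists (fun=> 0%N) => x y /[!inE] Ax Ay _.
exact: A1.
Qed.

Lemma countable_inj_image {T U} {f : T -> U} {A : set T} :
  {in A &, injective f} -> countable (f @` A) = countable A.
Proof. by move=> /inj_card_eq /eq_countable. Qed.

Section uncountable_split.
Context {T : Type} (S : set T).

(* Splitting without a well-order: a maximal matching pairs off all points of S
   but at most one, and the first coordinates of its pairs form one half. *)
Definition endpoint (p : T * T) (x : T) := p.1 = x \/ p.2 = x.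

Definition matching (M : set (T * T)) :=
  (forall p, M p -> [/\ S p.1, S p.2 & p.1 <> p.2]) /\
  (forall p q x, M p -> M q -> endpoint p x -> endpoint q x -> p = q).

Lemma exists_maximal_matching :
  exists M, matching M /\ forall N, M `<` N -> ~ matching N.
Proof.
apply: Zorn_bigcup => F Fmatch Ftot; split.
  by move=> p [M FM Mp]; exact: (Fmatch M FM).1.
move=> p q x [M FM Mp] [N FN Nq].
have [MN|NM] := Ftot M N FM FN.
- exact: (Fmatch N FN).2 p q x (MN p Mp) Nq.
- exact: (Fmatch M FM).2 p q x Mp (NM q Nq).
Qed.

Section maximal_matching.
Variable M : set (T * T).
Hypotheses (matchM : matching M) (maxM : forall N, M `<` N -> ~ matching N).

Let unmatched := [set u | S u /\ forall p, M p -> ~ endpoint p u].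

Lemma unmatched_subset1 : is_subset1 unmatched.
Proof.
move=> u v [Su Mu] [Sv Mv]; apply: contrapT => uv.
apply: (maxM (M `|` [set (u, v)])).
  split; first exact: subsetUl.
  by move=> /(_ (u, v) (or_intror erefl)) /Mu; apply; left.
split=> [p [/matchM.1 //| ->] //|].
have endpoint_uv p x : M p -> endpoint (u, v) x -> ~ endpoint p x.
  by move=> Mp [<-|<-]; [exact: Mu | exact: Mv].
move=> p q x [Mp|->] [Mq|->] px qx //.
- exact: matchM.2 px qx.
- by case: (endpoint_uv p x Mp qx px).
- by case: (endpoint_uv q x Mq px qx).
Qed.

Lemma matching_cover : S `<=` fst @` M `|` snd @` M `|` unmatched.
Proof.
move=> s Ss.
have [[p Mp [<-|<-]]|none] := pselect (exists2 p, M p & endpoint p s).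
- by left; left; exists p.
- by left; right; exists p.
- by right; split=> // p Mp ps; apply: none; exists p.
Qed.

Lemma matching_fst_inj : {in M &, injective fst}.
Proof.
move=> p q /[!inE] Mp Mq pq.
by apply: (matchM.2 p q p.1) => //; [left | left; rewrite pq].
Qed.

Lemma matching_snd_inj : {in M &, injective snd}.
Proof.
move=> p q /[!inE] Mp Mq pq.
by apply: (matchM.2 p q p.2) => //; [right | right; rewrite pq].
Qed.

Lemma matching_snd_sub : snd @` M `<=` S `\` fst @` M.
Proof.
move=> _ [p Mp <-]; have [_ Sp2 p12] := matchM.1 p Mp; split=> // -[q Mq qp].
have qp' : q = p := matchM.2 q p p.2 Mq Mp (or_introl qp) (or_intror erefl).
by apply: p12; rewrite -qp qp'.
Qed.

Lemma maximal_matching_split : ~ countable S ->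
  ~ countable (fst @` M) /\ ~ countable (S `\` fst @` M).
Proof.
move=> nS; have cMS : countable M -> countable S.
  move=> cM; apply: sub_countable (subset_card_le matching_cover) _.
  apply: countableU; last exact: subset1_countable unmatched_subset1.
  by apply: countableU;
    [rewrite (countable_inj_image matching_fst_inj)
    |rewrite (countable_inj_image matching_snd_inj)].
split; first by rewrite (countable_inj_image matching_fst_inj) => /cMS.
move=> cD; apply/nS/cMS; rewrite -(countable_inj_image matching_snd_inj).
exact: sub_countable (subset_card_le matching_snd_sub) cD.
Qed.

End maximal_matching.

Lemma split_uncountable : ~ countable S ->
  exists P, [/\ P `<=` S, ~ countable P & ~ countable (S `\` P)].
Proof.
move=> nS; have [M [matchM maxM]] := exists_maximal_matching.
have [nP nD] := maximal_matching_split _ matchM maxM nS.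
exists (fst @` M); split=> // _ [p Mp <-].
by have [] := matchM.1 p Mp.
Qed.

End uncountable_split.

Section topology.
Context {X : topologicalType}.
Implicit Types (A B D J M N U V : set X) (x y : X).

Lemma closure_openP A x :
  closure A x <-> forall U, open U -> U x -> A `&` U !=set0.
Proof.
split=> [Ax U oU Ux|AU B]; first exact/Ax/open_nbhs_nbhs.
rewrite nbhsE => -[U [oU Ux] UB].
by have [y [Ay /UB By]] := AU U oU Ux; exists y.
Qed.

Lemma closureI_open A U : open U -> closure A `&` U `<=` closure (A `&` U).
Proof.
move=> oU x [/closure_openP Ax Ux]; apply/closure_openP => W oW Wx.
by have [y [Ay [Uy Wy]]] := Ax (U `&` W) (openI oU oW) (conj Ux Wx); exists y.
Qed.

Lemma interior_closureD A : (closure A `\` A)° = set0.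
Proof.
apply/seteqP; split=> // x; rewrite /interior nbhsE => -[W [oW Wx] WR].
have [y [Ay Wy]] := (closure_openP _ _).1 (WR x Wx).1 W oW Wx.
by have [_] := WR y Wy.
Qed.

Lemma closure_split_uncountable A x : ~ countable A -> closure A x ->
  exists J, [/\ J `<=` A, ~ countable J & closure (A `\` J) x].
Proof.
move=> nA clA; have [P [PA nP nAP]] := split_uncountable _ nA.
have : closure (P `|` A `\` P) x by rewrite setDUK.
rewrite closureU => -[clP|clAP]; last by exists P.
by exists (A `\` P); split=> //; rewrite setDD setIidr.
Qed.

Lemma isolated_closure A x : isolated_point x -> closure A x -> A x.
Proof. by move=> ox /closure_openP /(_ _ ox erefl) [y [Ay <-]]. Qed.

Lemma open_isolated_subset D : D `<=` [set x | isolated_point x] -> open D.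
Proof.
move=> DI; rewrite openE => x Dx.
apply: (@filterS _ _ _ [set x]) => [_ -> //|].
exact/open_nbhs_nbhs/(conj (DI x Dx)).
Qed.

Section lusin.
Hypotheses (reg : regular_space X) (wh : open_whyburn X) (KL : K_lindelof X).

Lemma regular_open_nbhs {x U} : open U -> U x ->
  exists V, [/\ open V, V x & closure V `<=` U].
Proof.
move=> oU Ux; have [C] := reg x U (open_nbhs_nbhs (conj oU Ux)).
rewrite nbhsE => -[V [oV Vx] VC] CU.
by exists V; split=> //; exact: subset_trans (closureS VC) CU.
Qed.

Lemma accessible_regular_hausdorff : accessible_space X -> hausdorff_space X.
Proof.
move=> acc p q pq; apply: contrapT => npq.
have oq : open (~` [set q]) by exact/closed_openC/accessible_closed_set1.
have [V [oV Vp Vq]] := regular_open_nbhs oq npq.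
have oW : open (~` closure V) by exact/closed_openC/closed_closure.
have [z [Vz Wz]] := pq V _ (open_nbhs_nbhs (conj oV Vp))
  (open_nbhs_nbhs (conj oW (fun qV => Vq q qV erefl))).
exact/Wz/subset_closure.
Qed.

Lemma K_lindelof_countable S :
  (forall x, exists V,
    [/\ open V, closure V x & is_subset1 (closure V `&` S)]) ->
  countable S.
Proof.
move=> coverS; pose U := [set V | open V /\ is_subset1 (closure V `&` S)].
have [|U' [U'U cU' [_ U'cover]]] := KL U.
  split=> [V []//|]; apply/seteqP; split=> // x _.
  by have [V [oV Vx V1]] := coverS x; exists V.
apply: (@sub_countable _ _ _ (\bigcup_(V in U') (closure V `&` S))).
  apply: subset_card_le => x Sx.
  by have : [set: X] x by []; rewrite -U'cover => -[V U'V Vx]; exists V.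
by apply: bigcup_countable => // V /U'U [_ /subset1_countable].
Qed.

Lemma closed_nowhere_dense_countable M : closed M -> M° = set0 -> countable M.
Proof.
move=> cM M0; apply: K_lindelof_countable => x.
have oCM : open (~` M) by exact: closed_openC.
have [Mx|nMx] := pselect (M x); last first.
  have [V [oV Vx VM]] := regular_open_nbhs oCM nMx.
  exists V; split=> //; first exact: subset_closure.
  by move=> a b [/VM aM /aM].
have clx : closure (~` M) x by rewrite closure_setC M0.
have [B [oB _]] := wh _ oCM _ clx (fun nM => nM Mx).
rewrite setDE setCK => BM; exists B; rewrite BM; split=> //.
  by have [] : (closure B `&` M) x by rewrite BM.
by move=> a b -> ->.
Qed.

Lemma nowhere_dense_countable N : nowhere_dense N -> countable N.
Proof.
move=> N0; apply: sub_countable (subset_card_le (@subset_closure _ N)) _.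
exact: closed_nowhere_dense_countable (@closed_closure _ N) N0.
Qed.

Lemma open_whyburn_choice A : open A -> exists B : X -> set X,
  forall y, (closure A `\` A) y -> B y `<=` A /\ closure (B y) `\` A = [set y].
Proof.
move=> oA; suff /boolp.choice[B HB] : forall y, exists By,
    (closure A `\` A) y -> By `<=` A /\ closure By `\` A = [set y].
  by exists B.
move=> y; have [[cy nAy]|nRy] := pselect ((closure A `\` A) y).
  by have [By [_ ByA ByE]] := wh _ oA _ cy nAy; exists By.
by exists set0 => /nRy.
Qed.

Let I := [set x : X | isolated_point x].

Lemma countable_isolated_subset J : J `<=` I ->
  closure I `\` I `<=` closure (I `\` J) -> countable J.
Proof.
move=> JI RJ; apply: K_lindelof_countable => x.
suff [V [oV Vx VJ]] : exists V, [/\ open V, closure V x & is_subset1 (V `&` J)].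
  exists V; split=> // a b [Va Ja] [Vb Jb].
  by apply: VJ; split=> //; exact: isolated_closure (JI _ _) _.
have [Ix|nIx] := pselect (I x).
  exists [set x]; split=> //; first exact: subset_closure.
  by move=> a b [-> _] [-> _].
have [clx|nclx] := pselect (closure I x).
  exists (I `\` J); split; [|exact: RJ|by move=> a b [[_ + ]]].
  by apply: open_isolated_subset => y [].
exists (~` closure I); split=> //; [exact/closed_openC/closed_closure | |].
  exact: subset_closure.
by move=> a b [nIa /JI Ia]; case: nIa; exact: subset_closure.
Qed.

Lemma exists_uncountable_isolated_codense :
  ~ countable I -> countable (closure I `\` I) ->
  exists J,
    [/\ J `<=` I, ~ countable J & closure I `\` I `<=` closure (I `\` J)].
Proof.
set R := closure I `\` I => nI cR.
have oI : open I by exact: open_isolated_subset.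
have [B HB] := open_whyburn_choice _ oI.
have Bcl y : R y -> closure (B y) y.
  move=> Ry; have [_ BE] := HB y Ry.
  by have [] : (closure (B y) `\` I) y by rewrite BE.
have Bcl_notin y y' : R y -> R y' -> y' <> y -> ~ closure (B y) y'.
  move=> Ry Ry' ne cl; have [_ BE] := HB y Ry.
  have : (closure (B y) `\` I) y' by split=> //; exact: Ry'.2.
  by rewrite BE; exact: ne.
(* Either split an uncountable B y0, keeping in I \ J a half that still
   accumulates at y0 (the other points of R are kept away from cl (B y0)),
   or remove from I the countable union of all the B y. *)
have [[y0 Ry0 nB0]|cB] := pselect (exists2 y0, R y0 & ~ countable (B y0)).
  have [B0I _] := HB y0 Ry0.
  have [J [JB nJ clJ]] := closure_split_uncountable _ _ nB0 (Bcl y0 Ry0).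
  exists J; split=> //; first exact: subset_trans JB B0I.
  move=> y Ry; have [->|ney] := pselect (y = y0).
    by apply: closureS clJ => z [/B0I Iz nJz].
  have oC : open (~` closure (B y0)) by exact/closed_openC/closed_closure.
  have := closureI_open _ _ oC _ (conj (Bcl y Ry) (Bcl_notin y0 y Ry0 Ry ney)).
  apply: closureS => z [Bz nB0z]; have [BI _] := HB y Ry.
  by split=> [|/JB /subset_closure //]; exact: BI.
set U := \bigcup_(y in R) B y.
have UI : U `<=` I by move=> z [y Ry Bz]; have [BI _] := HB y Ry; exact: BI.
exists (I `\` U); split=> //.
  apply: contra_not nI => cIU; rewrite -(setDUK UI); apply: countableU cIU.
  apply: bigcup_countable => // y Ry.
  by apply: contrapT => nBy; apply: cB; exists y.
move=> y Ry; apply: closureS (Bcl y Ry) => z Bz.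
by split=> [|[_]]; [apply: UI | apply]; exists y.
Qed.

Lemma isolated_points_countable : countable I.
Proof.
have cR : countable (closure I `\` I).
  apply: closed_nowhere_dense_countable; last exact: interior_closureD.
  rewrite setDE; apply: closedI; first exact: closed_closure.
  exact/open_closedC/open_isolated_subset.
apply: contrapT => nI.
have [J [JI nJ RJ]] := exists_uncountable_isolated_codense nI cR.
exact: nJ (countable_isolated_subset _ JI RJ).
Qed.

End lusin.
End topology.

Theorem lemma3p1 (X : topologicalType) :
  ~ countable [set: X] ->
  accessible_space X -> regular_space X ->
  open_whyburn X -> K_lindelof X ->
  lusin_space X.
Proof.
move=> nX acc reg wh KL; split=> //.
- exact: accessible_regular_hausdorff.
- exact: nowhere_dense_countable.
- exact: isolated_points_countable.
Qed.
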